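(* Let $n\ge 3$, let $A=[a_{ij}]$ be a real $n\times n$ matrix with zero diagonal and let $f(\sigma)=\sum_{i=1}^{n-1}\sum_{j=i+1}^n a_{\sigma(i)\sigma(j)}$ be the LOP objective function on $\Sigma_n$. Then $\hat f_{(n-1,1)}=0$ if and only if $\sum_{j=1}^n(a_{ij}-a_{ji})=0$ for all $i=1,\dots,n$.
   Context: $\Sigma_n$ is the symmetric group on $\{1,\dots,n\}$; $\sigma(k)$ is the row/column index placed in position $k$. For a partition $\lambda$ of $n$, $\rho_\lambda$ is the irreducible representation of $\Sigma_n$ indexed by $\lambda$ and $\hat f_\lambda=\sum_{\sigma\in\Sigma_n}f(\sigma)\rho_\lambda(\sigma)$. *)

From HB Require Import structures.
From mathcomp Require Import all_boot all_order all_algebra all_fingroup.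
Set Implicit Arguments. Unset Strict Implicit. Unset Printing Implicit Defensive.
Import Order.TTheory GRing.Theory Num.Theory.
Local Open Scope ring_scope.

(* Positions and row/column indices are 0-based: {1..n} is 'I_n. *)

Definition permv (n : nat) (s : 'S_n) (k : nat) : nat :=
  if @insub nat (fun k => k < n)%N 'I_n k is Some x then val (s x) else k.

(* The irreducible representation rho_(n-1,1) (standard representation) of
   Sigma_n, realized on the sum-zero subspace of R^n with basis
   b_i = e_i - e_n (i = 1..n-1), where sigma acts by e_k |-> e_{sigma(k)}:
   sigma(b_j) = e_{sigma j} - e_{sigma n} = b_{sigma j} - b_{sigma n}
   (with b_n = 0). *)
Definition std_rep (R : ringType) (n : nat) (s : 'S_n) : 'M[R]_(n.-1) :=
  \matrix_(i, j) (((permv s j == i) : nat)%:R - ((permv s n.-1 == i) : nat)%:R).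

Definition lop_obj (R : ringType) (n : nat) (A : 'M[R]_n) (s : 'S_n) : R :=
  \sum_(i : 'I_n) \sum_(j : 'I_n | (i < j)%N) A (s i) (s j).

Definition fourier_std (R : ringType) (n : nat) (f : 'S_n -> R) : 'M[R]_(n.-1) :=
  \sum_(s : 'S_n) f s *: std_rep R s.

(* Entry [(i, j)] of the Fourier coefficient is [M(i, j) - M(i, last)], where [M(k, p)]
   sums [f] over the permutations putting [k] in position [p].  Substituting
   [t = s^-1], [M(k, p)] weighs each [A a b] by the number of [t] with [t k = p]
   and [t a < t b].  By the symmetry [a <-> b], pairs avoiding [k] are counted
   independently of [p], so [M(k, p) - M(k, last)] is a count [N(k, p)] times the
   balance [sum_j (A k j - A j k)], with [N(k, k) > 0] for [k <> last].  Hence the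
   coefficient vanishes iff every balance except the last one does, and the
   last one then vanishes too because the balances always sum to zero. *)
From HB Require Import structures.
From mathcomp Require Import all_boot all_order all_algebra all_fingroup.
From mathcomp Require Import zify.
Import Order.TTheory GRing.Theory Num.Theory.
Set Implicit Arguments. Unset Strict Implicit. Unset Printing Implicit Defensive.
Local Open Scope ring_scope.

Section PermCounts.

Variable n : nat.
Implicit Types (k p q a b c : 'I_n) (t : 'S_n).

Definition nperm_at k p : nat := (\sum_(t : 'S_n) (t k == p))%N.

Definition nperm_at_lt k p a b : nat :=
  (\sum_(t : 'S_n) ((t k == p) && (t a < t b)))%N.

Lemma nperm_at_indep k p q : nperm_at k p = nperm_at k q.
Proof.
rewrite /nperm_at (reindex_inj (mulIg (tperm p q))); apply: eq_bigr => t _.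
by rewrite permM (canF_eq (tpermK p q)) tpermL.
Qed.

Lemma nperm_at_ltC k p a b :
  a != b -> (nperm_at_lt k p a b + nperm_at_lt k p b a = nperm_at k p)%N.
Proof.
move=> neq_ab; rewrite -big_split; apply: eq_bigr => t _ /=.
have : t a != t b by rewrite (inj_eq perm_inj).
by case: (t k == p) => //=; case: ltngtP => // /val_inj ->; rewrite eqxx.
Qed.

Lemma nperm_at_lt_diag k p a : nperm_at_lt k p a a = 0%N.
Proof. by rewrite /nperm_at_lt big1 // => t _; rewrite ltnn andbF. Qed.

Lemma nperm_at_lt_sym k p a b :
  a != k -> b != k -> nperm_at_lt k p a b = nperm_at_lt k p b a.
Proof.
move=> ak bk; rewrite /nperm_at_lt (reindex_inj (mulgI (tperm a b))).
by apply: eq_bigr => t _; rewrite !permM tpermL tpermR tpermD // eq_sym.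
Qed.

Lemma nperm_at_lt_relabel k p b c :
  b != k -> c != k -> nperm_at_lt k p k b = nperm_at_lt k p k c.
Proof.
move=> bk ck; rewrite /nperm_at_lt (reindex_inj (mulgI (tperm b c))).
by apply: eq_bigr => t _; rewrite !permM tpermL tpermD // eq_sym.
Qed.

(* The two orders of [a, b] are exchanged by [tperm a b] and together count
   [nperm_at k p], which does not depend on [p]. *)
Lemma nperm_at_lt_indep k p q a b :
  a != k -> b != k -> nperm_at_lt k p a b = nperm_at_lt k q a b.
Proof.
move=> ak bk; have [<-|neq_ab] := eqVneq a b; first by rewrite !nperm_at_lt_diag.
have := nperm_at_ltC k p neq_ab; have := nperm_at_ltC k q neq_ab.
rewrite (nperm_at_indep k p q) (nperm_at_lt_sym p ak bk) (nperm_at_lt_sym q ak bk).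
lia.
Qed.

End PermCounts.

Local Notation widen := (widen_ord (leqnSn _)).

Section LastPosition.

Variable m : nat.
Implicit Types (k p a b : 'I_m.+1).

Lemma nperm_at_lt_max k b : nperm_at_lt k ord_max k b = 0%N.
Proof.
rewrite /nperm_at_lt big1 // => t _.
by case: eqP => //= ->; rewrite ltnNge -ltnS ltn_ord.
Qed.

Lemma nperm_at_lt_widen_gt0 (i : 'I_m) :
  (0 < nperm_at_lt (widen i) (widen i) (widen i) ord_max)%N.
Proof.
have lt_i_max : (widen i < @ord_max m)%N := ltn_ord i.
by rewrite /nperm_at_lt (bigD1 1%g) //= !permE eqxx lt_i_max.
Qed.

(* Pairs avoiding [k] do not depend on [p]; pairs through [k] reduce to the pair
   [(k, ord_max)] by relabelling, and [k] sent to the last position is never below. *)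
Lemma nperm_at_lt_sub_max (R : pzRingType) k p a b : k != ord_max ->
  (nperm_at_lt k p a b)%:R - (nperm_at_lt k ord_max a b)%:R =
  (nperm_at_lt k p k ord_max)%:R * (((a == k) : nat)%:R - ((b == k) : nat)%:R) :> R.
Proof.
move=> k_max; have max_k : ord_max != k by rewrite eq_sym.
have [<-|neq_ab] := eqVneq a b; first by rewrite !nperm_at_lt_diag !subrr mulr0.
case: (eqVneq a k) neq_ab => [-> kb|ak neq_ab].
  have bk : b != k by rewrite eq_sym.
  rewrite (nperm_at_lt_relabel p bk max_k) nperm_at_lt_max (negbTE bk).
  by rewrite /= !subr0 mulr1.
have [->|bk] := eqVneq b k.
  have split_p := nperm_at_ltC k p ak; have split_max := nperm_at_ltC k ord_max ak.
  rewrite nperm_at_lt_max addn0 in split_max.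
  rewrite (nperm_at_lt_relabel p ak max_k) (nperm_at_indep k p ord_max) -split_max in split_p.
  by rewrite -split_p natrD opprD addrA subrr add0r /= sub0r mulrN1.
by rewrite (nperm_at_lt_indep p ord_max ak bk) !subrr mulr0.
Qed.

End LastPosition.

Definition marginal (R : nmodType) n (f : 'S_n -> R) (k p : 'I_n) : R :=
  \sum_(s : 'S_n | s p == k) f s.

Lemma lop_obj_inv (R : nzRingType) n (A : 'M[R]_n) (t : 'S_n) :
  lop_obj A t^-1 = \sum_a \sum_(b | (t a < t b)%N) A a b.
Proof.
rewrite /lop_obj (reindex_inj (@perm_inj _ t)); apply: eq_bigr => a _.
by rewrite (reindex_inj (@perm_inj _ t)); apply: eq_bigr => b _; rewrite !permK.
Qed.

Lemma marginal_lop (R : comNzRingType) n (A : 'M[R]_n) (k p : 'I_n) :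
  marginal (lop_obj A) k p = \sum_a \sum_b A a b * (nperm_at_lt k p a b)%:R.
Proof.
rewrite /marginal (reindex_inj invg_inj) /=.
under eq_bigl => t do rewrite (canF_eq (permKV t)) eq_sym.
under eq_bigr => t _ do rewrite lop_obj_inv.
rewrite exchange_big; apply: eq_bigr => a _.
under eq_bigr => t _ do rewrite big_mkcond.
rewrite exchange_big; apply: eq_bigr => b _.
rewrite /nperm_at_lt natr_sum mulr_sumr big_mkcond; apply: eq_bigr => t _ /=.
by case: (t k == p); case: (t a < t b)%N; rewrite ?mulr1 ?mulr0.
Qed.

Lemma sum_mul_indicator (R : pzSemiRingType) (I : finType) (i0 : I) (F : I -> R) :
  \sum_i F i * ((i == i0) : nat)%:R = F i0.
Proof.
under eq_bigr => i _ do rewrite mulr_natr mulrb.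
by rewrite -big_mkcond big_pred1_eq.
Qed.

Lemma marginal_lop_sub_max (R : comNzRingType) m (A : 'M[R]_m.+1) (k p : 'I_m.+1) :
  k != ord_max ->
  marginal (lop_obj A) k p - marginal (lop_obj A) k ord_max =
  (nperm_at_lt k p k ord_max)%:R * \sum_j (A k j - A j k).
Proof.
move=> k_max; rewrite !marginal_lop -sumrB.
under eq_bigr => a _ do rewrite -sumrB.
under eq_bigr => a _ do under eq_bigr => b _ do
  rewrite -mulrBr (nperm_at_lt_sub_max _ _ _ _ k_max) mulrCA.
under eq_bigr => a _ do rewrite -mulr_sumr.
rewrite -mulr_sumr; congr (_ * _).
under eq_bigr => a _ do
  rewrite (eq_bigr _ (fun b _ => mulrBr _ _ _)) sumrB sum_mul_indicator -mulr_suml.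
by rewrite !sumrB sum_mul_indicator.
Qed.

Lemma permvE n (s : 'S_n) (x : 'I_n) : permv s x = s x.
Proof. by rewrite /permv valK. Qed.

Lemma std_repE (R : nzRingType) m (s : 'S_m.+1) (i j : 'I_m) :
  std_rep R s i j = ((s (widen j) == widen i) : nat)%:R - ((s ord_max == widen i) : nat)%:R.
Proof. by rewrite mxE (permvE s (widen j)) (permvE s ord_max). Qed.

Lemma fourier_std_marginal (R : nzRingType) m (f : 'S_m.+1 -> R) (i j : 'I_m) :
  fourier_std f i j = marginal f (widen i) (widen j) - marginal f (widen i) ord_max.
Proof.
rewrite /fourier_std summxE /marginal !(big_mkcond (fun s => _ == _)) -sumrB.
by apply: eq_bigr => s _; rewrite mxE std_repE mulrBr !mulr_natr !mulrb.
Qed.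

Lemma fourier_std_lopE (R : comNzRingType) m (A : 'M[R]_m.+1) (i j : 'I_m) :
  fourier_std (lop_obj A) i j =
  (nperm_at_lt (widen i) (widen j) (widen i) ord_max)%:R *
  \sum_k (A (widen i) k - A k (widen i)).
Proof.
by rewrite fourier_std_marginal marginal_lop_sub_max // -val_eqE /= neq_ltn ltn_ord.
Qed.

Lemma neq_ord_max_widen m (k : 'I_m.+1) : k != ord_max -> exists i : 'I_m, k = widen i.
Proof.
move=> k_max; have lt_k_m : (k < m)%N by rewrite ltn_neqAle -ltnS ltn_ord andbT.
by exists (Ordinal lt_k_m); apply: val_inj.
Qed.

Lemma sum_sub_transpose_eq0 (R : zmodType) n (A : 'M[R]_n) :
  \sum_i \sum_j (A i j - A j i) = 0.
Proof. by under eq_bigr do rewrite sumrB; rewrite sumrB exchange_big subrr. Qed.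

Theorem proposition3 (R : realFieldType) (n : nat) (A : 'M[R]_n) :
  (3 <= n)%N ->
  (forall i : 'I_n, A i i = 0) ->
  fourier_std (lop_obj A) = 0 <->
  (forall i : 'I_n, \sum_(j : 'I_n) (A i j - A j i) = 0).
Proof.
case: n A => [|m] A _ _; first by split=> [_ [] // | _]; apply/matrixP => -[].
split=> [F0 k | balanced]; last first.
  by apply/matrixP => i j; rewrite fourier_std_lopE balanced mulr0 mxE.
suff balanced_lt (j : 'I_m.+1) : j != ord_max -> \sum_l (A j l - A l j) = 0.
  have [-> | /balanced_lt //] := eqVneq k ord_max.
  by have := sum_sub_transpose_eq0 A; rewrite (big_only1 ord_max) // => j /balanced_lt.
move=> /neq_ord_max_widen[i ->]; have /esym/eqP := fourier_std_lopE A i i.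
by rewrite F0 mxE mulf_eq0 pnatr_eq0 eqn0Ngt nperm_at_lt_widen_gt0 => /eqP.
Qed.
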